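(* Let $n\ge 1$ and let $\gamma_{n,k}^S$ be the integers defined by $$\sum_{\pi\in\mathfrak{S}_n(2413,3142)}t^{\mathrm{des}(\pi)}=\sum_{k=0}^{\lfloor\frac{n-1}{2}\rfloor}\gamma_{n,k}^S\, t^k (1+t)^{n-1-2k}.$$ Then for $0\le k\le\lfloor (n-1)/2\rfloor$, $\gamma_{n,k}^S=|\mathfrak{D}\mathfrak{T}_{n,k}^{1}|$, where $$\mathfrak{D}\mathfrak{T}_{n,k}^{1} :=\{T\in\mathfrak{D}\mathfrak{T}_n : r_{o}(T)=n-1-2k \text{ and every right chain of odd length in $T$ has first node labelled }\oplus \}.$$
   Context: $\mathfrak{S}_n(2413,3142)$ is the set of permutations of $[n]$ avoiding the patterns $2413$ and $3142$; $\mathrm{des}(\pi)=\#\{i\in[n-1]:\pi_i>\pi_{i+1}\}$. (The integers $\gamma^S_{n,k}$ are uniquely determined, this polynomial being palindromic of darga $n-1$.) A binary tree is either empty or consists of a root with a left and a right subtree, both binary trees. A right chain is a maximal sequence of nodes $v_1,\dots,v_l$ with $v_1$ the root or a left child and each $v_{j+1}$ the right child of $v_j$; $l$ is its length and $v_1$ its first node. $r_o(T)$ is the number of right chains of odd length in $T$. A di-sk tree is a binary tree with nodes labelled $\oplus$ or $\ominus$ such that labels alternate along every right chain; $\mathfrak{D}\mathfrak{T}_n$ is the set of di-sk trees with $n-1$ nodes. *)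

From HB Require Import structures.
From mathcomp Require Import all_boot all_order all_algebra all_fingroup.
From Stdlib Require List.
Set Implicit Arguments. Unset Strict Implicit. Unset Printing Implicit Defensive.
Import GRing.Theory.

(* values of a permutation of [n] = {1..n}, represented on 'I_n (shift by 1
   is irrelevant for patterns and descents) *)
Definition pval n (pi : {perm 'I_n}) (i : 'I_n) : nat := val (pi i).

Definition contains_pat n k (p : 'I_k -> nat) (pi : {perm 'I_n}) : bool :=
  [exists f : {ffun 'I_k -> 'I_n},
     [forall a : 'I_k, forall b : 'I_k,
        ((a < b)%N ==> (f a < f b)%N) &&
        ((pval pi (f a) < pval pi (f b))%N == (p a < p b)%N)]].

Definition pat2413 : 'I_4 -> nat := fun i => nth 0%N [:: 2; 4; 1; 3]%N i.
Definition pat3142 : 'I_4 -> nat := fun i => nth 0%N [:: 3; 1; 4; 2]%N i.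

Definition avoids_2413_3142 n (pi : {perm 'I_n}) : bool :=
  ~~ contains_pat pat2413 pi && ~~ contains_pat pat3142 pi.

Definition des n (pi : {perm 'I_n}) : nat :=
  let s := [seq pval pi i | i <- enum 'I_n] in
  \sum_(i < n.-1) (nth 0 s i.+1 < nth 0 s i)%N.

(* label true = (+), false = (-) *)
Inductive tree : Type :=
| Leaf : tree
| Node : bool -> tree -> tree -> tree.

Fixpoint nnodes (t : tree) : nat :=
  match t with Leaf => 0 | Node _ l r => (nnodes l + nnodes r).+1 end.

Fixpoint spine (t : tree) : seq bool :=
  match t with Leaf => [::] | Node a _ r => a :: spine r end.

(* the right chains of t, each given by its sequence of labels (first node
   first); st = whether the root of t is the first node of a chain
   (i.e. it is the root of the whole tree or a left child) *)
Fixpoint chains (st : bool) (t : tree) : seq (seq bool) :=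
  match t with
  | Leaf => [::]
  | Node _ l r => (if st then [:: spine t] else [::]) ++ chains true l ++ chains false r
  end.

Definition right_chains (T : tree) : seq (seq bool) := chains true T.

Definition r_o (T : tree) : nat := count (fun c => odd (size c)) (right_chains T).

Definition is_disk (T : tree) : bool :=
  all (fun c => sorted (fun a b : bool => a != b) c) (right_chains T).

Definition in_DT (n : nat) (T : tree) : bool := is_disk T && (nnodes T == n.-1).

Definition in_DT1 (n k : nat) (T : tree) : bool :=
  [&& in_DT n T, r_o T == (n.-1 - 2 * k)%N &
      all (fun c => odd (size c) ==> (head false c == true)) (right_chains T)].

Definition card_trees (P : tree -> bool) (c : nat) : Prop :=
  exists l : list tree, List.NoDup l /\ (forall t, List.In t l <-> P t) /\ List.length l = c.

Open Scope ring_scope.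

Definition des_poly (n : nat) : {poly int} :=
  \sum_(pi : {perm 'I_n} | avoids_2413_3142 pi) 'X^(des pi).

Definition gamma_expansion (n : nat) (g : nat -> int) : {poly int} :=
  \sum_(k < (n.-1)./2.+1) (g k)%:P * 'X^k * (1 + 'X) ^+ (n.-1 - 2 * k)%N.

(* A permutation avoids 2413 and 3142 iff it is separable: it is [1] or a
   direct or skew sum of two smaller separable permutations.  Splitting at the
   first direct (resp. skew) split point and recursing gives a bijection with
   di-sk trees, a node labelled (+) (resp. (-)) being the direct (resp. skew)
   sum of the permutation of its right subtree and that of its left subtree;
   descents correspond to (-) nodes.  Hence the descent polynomial is a sum over
   trees of a product over right chains of [X^(number of (-) labels)] on
   alternating chains.  On a chain of length [l] the two alternating labellings
   give together [2 X^(l/2)] for even [l] and [X^(l/2) (1 + X)] for odd [l]; so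
   does the weight [X^(l/2) (1 + X)^(l mod 2)] restricted to alternating
   labellings whose odd chains start with (+).  As chains can be relabelled
   independently, both weights have the same total over trees with [n - 1]
   nodes, and the second total is the gamma expansion with coefficients
   [|DT^1_{n,k}|].  The coefficients are unique by triangularity. *)

From HB Require Import structures.
From mathcomp Require Import all_boot all_order all_algebra fingroup perm.
From mathcomp Require Import zify.

Set Implicit Arguments. Unset Strict Implicit. Unset Printing Implicit Defensive.
Import GRing.Theory.
Local Open Scope nat_scope.

Local Notation alternating := (sorted (fun a b : bool => a != b)).

Definition lt_dir (up : bool) : rel nat := fun x y => if up then x < y else y < x.

Lemma lt_dirN up x y : lt_dir (~~ up) x y = lt_dir up y x.
Proof. by case: up. Qed.

Lemma lt_dir_total up x y : x != y -> lt_dir up x y || lt_dir up y x.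
Proof. by case: up; rewrite /lt_dir neq_ltn // orbC. Qed.

Lemma lt_dir_asym up x y : lt_dir up x y -> ~~ lt_dir up y x.
Proof. by case: up; rewrite /lt_dir -leqNgt => /ltnW. Qed.

Lemma lt_dir_trans up y x z : lt_dir up x y -> lt_dir up y z -> lt_dir up x z.
Proof. by case: up => /= h1 h2; [exact: ltn_trans h1 h2 | exact: ltn_trans h2 h1]. Qed.

Lemma lt_dir_mono up f (s : seq nat) :
  {in s &, {mono f : x y / x < y}} -> {in s &, {mono f : x y / lt_dir up x y}}.
Proof. by move=> hf x y hx hy; case: up; rewrite /lt_dir hf. Qed.

(** * Occurrences of 2413 and 3142 in sequences *)

(* For [up = false] this is an occurrence of 3142, the complement of 2413. *)
Definition shape2413 up (a b c d : nat) :=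
  [&& lt_dir up c a, lt_dir up a d & lt_dir up d b].

Definition has2413 (up : bool) (s : seq nat) : Prop :=
  exists i0 i1 i2 i3, [/\ i0 < i1, i1 < i2, i2 < i3, i3 < size s &
    shape2413 up (nth 0 s i0) (nth 0 s i1) (nth 0 s i2) (nth 0 s i3)].

Definition separable (s : seq nat) := ~ has2413 true s /\ ~ has2413 false s.

Lemma has2413_catl up s t : has2413 up s -> has2413 up (s ++ t).
Proof.
move=> [i0 [i1 [i2 [i3 [h01 h12 h23 h3 hR]]]]].
exists i0, i1, i2, i3; split => //; first by rewrite size_cat; lia.
by rewrite !nth_cat (ltn_trans h01 (ltn_trans h12 (ltn_trans h23 h3)))
  (ltn_trans h12 (ltn_trans h23 h3)) (ltn_trans h23 h3) h3.
Qed.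

Lemma has2413_catr up s t : has2413 up t -> has2413 up (s ++ t).
Proof.
move=> [i0 [i1 [i2 [i3 [h01 h12 h23 h3 hR]]]]].
exists (size s + i0), (size s + i1), (size s + i2), (size s + i3); split; try lia.
  by rewrite size_cat; lia.
by rewrite !nth_cat !ltnNge !leq_addr /= !addKn.
Qed.

Lemma has2413_map up f s : {in s &, {mono f : x y / x < y}} ->
  has2413 up (map f s) <-> has2413 up s.
Proof.
move=> /(lt_dir_mono up) hf.
have shapeE i0 i1 i2 i3 : i0 < size s -> i1 < size s -> i2 < size s -> i3 < size s ->
    shape2413 up (nth 0 (map f s) i0) (nth 0 (map f s) i1) (nth 0 (map f s) i2)
      (nth 0 (map f s) i3) =
    shape2413 up (nth 0 s i0) (nth 0 s i1) (nth 0 s i2) (nth 0 s i3).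
  by move=> *; rewrite !(nth_map 0) // /shape2413 !hf ?mem_nth.
rewrite /has2413 size_map; split => -[i0 [i1 [i2 [i3 [h01 h12 h23 h3 hR]]]]];
  have h2 := ltn_trans h23 h3; have h1 := ltn_trans h12 h2;
  have h0 := ltn_trans h01 h1;
  by exists i0, i1, i2, i3; split => //; move: hR; rewrite shapeE.
Qed.

Lemma has2413_cat_sep up sep (s t : seq nat) :
  {in s & t, forall x y, lt_dir sep x y} ->
  has2413 up (s ++ t) -> has2413 up s \/ has2413 up t.
Proof.
move=> hsep [i0 [i1 [i2 [i3 [h01 h12 h23 h3 hR]]]]].
have [h3s|h3s] := ltnP i3 (size s).
  have h2s := ltn_trans h23 h3s; have h1s := ltn_trans h12 h2s.
  have h0s := ltn_trans h01 h1s.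
  by left; exists i0, i1, i2, i3; split => //; move: hR; rewrite !nth_cat h0s h1s h2s h3s.
have [h0s|h0s] := leqP (size s) i0.
  right; exists (i0 - size s), (i1 - size s), (i2 - size s), (i3 - size s).
  rewrite size_cat in h3; split; try lia.
  have h1s : size s <= i1 by lia.
  have h2s : size s <= i2 by lia.
  by move: hR; rewrite !nth_cat !ltnNge h0s h1s h2s h3s.
exfalso; rewrite size_cat in h3.
have inl k : k < size s -> nth 0 (s ++ t) k \in s.
  by move=> hk; rewrite nth_cat hk mem_nth.
have inr k : size s <= k -> k < size s + size t -> nth 0 (s ++ t) k \in t.
  by move=> hk hk'; rewrite nth_cat ltnNge hk mem_nth // ltn_subLR.
have hv0 := inl i0 h0s; have hv3 := inr i3 h3s h3.
have s03 := hsep _ _ hv0 hv3.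
(* The cut falls after i0, after i1 or after i2; none is compatible with 2413. *)
have [h1s|h1s] := ltnP i1 (size s).
  have s13 := hsep _ _ (inl _ h1s) hv3.
  have [h2s|h2s] := ltnP i2 (size s).
    have s23 := hsep _ _ (inl _ h2s) hv3.
    by clear hsep; case: up sep hR s03 s13 s23 => -[]; rewrite /shape2413 /lt_dir; lia.
  have s02 := hsep _ _ hv0 (inr _ h2s (ltn_trans h23 h3)).
  have s12 := hsep _ _ (inl _ h1s) (inr _ h2s (ltn_trans h23 h3)).
  by clear hsep; case: up sep hR s03 s13 s02 s12 => -[]; rewrite /shape2413 /lt_dir; lia.
have s01 := hsep _ _ hv0 (inr _ h1s (ltn_trans h12 (ltn_trans h23 h3))).
have s02 := hsep _ _ hv0 (inr _ (leq_trans h1s (ltnW h12)) (ltn_trans h23 h3)).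
by clear hsep; case: up sep hR s03 s01 s02 => -[]; rewrite /shape2413 /lt_dir; lia.
Qed.

Lemma separable_cat sep s t : {in s & t, forall x y, lt_dir sep x y} ->
  separable s -> separable t -> separable (s ++ t).
Proof.
by move=> hsep [s1 s2] [t1 t2]; split => /(has2413_cat_sep hsep) [].
Qed.

Lemma separable_map f s : {in s &, {mono f : x y / x < y}} ->
  separable (map f s) <-> separable s.
Proof. by move=> hf; rewrite /separable !has2413_map. Qed.

Lemma separable_take i s : separable s -> separable (take i s).
Proof.
by move=> [h1 h2]; split=> /(has2413_catl (drop i s)); rewrite cat_take_drop.
Qed.

Lemma separable_drop i s : separable s -> separable (drop i s).
Proof.
by move=> [h1 h2]; split=> /(has2413_catr (take i s)); rewrite cat_take_drop.
Qed.

Definition splits (up : bool) (s : seq nat) (i : nat) : bool :=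
  (0 < i < size s) && all (fun x => all (lt_dir up x) (drop i s)) (take i s).

Lemma splitsP up s i : reflect
  (0 < i < size s /\ {in take i s & drop i s, forall x y, lt_dir up x y})
  (splits up s i).
Proof.
apply: (iffP andP) => [[hi /allP hs]|[hi hs]]; split => //.
  by move=> x y hx hy; have /allP := hs x hx; apply.
by apply/allP => x hx; apply/allP => y hy; exact: hs.
Qed.

Lemma all_take_find (p : pred nat) s : all (predC p) (take (find p s) s).
Proof. by elim: s => //= y s IH; case: ifP => //= ->. Qed.

Lemma has2413_rcons_split up (A B : seq nat) x j k :
  {in A & B, forall a b, lt_dir up a b} -> j < k < size A -> 0 < size B ->
  lt_dir up x (nth 0 A j) -> lt_dir up (nth 0 A k) x ->
  has2413 (~~ up) (A ++ B ++ [:: x]).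
Proof.
move=> hAB /andP [hjk hkA] hB hxj hkx.
exists j, k, (size A), (size A + size B); split => //; rewrite ?size_cat /=; try lia.
rewrite !nth_cat hkA (ltn_trans hjk hkA) ltnn subnn hB ltnNge leq_addr addKn ltnn subnn.
rewrite /shape2413 !lt_dirN hxj hkx /= andbT.
by apply: hAB; apply: mem_nth; [exact: ltn_trans hjk hkA | exact: hB].
Qed.

Lemma splits_rcons_cut up (A B : seq nat) x j :
  {in A & B, forall a b, lt_dir up a b} -> 0 < j < size A ->
  {in take j A, forall a, lt_dir up a x} -> {in drop j A, forall a, lt_dir up x a} ->
  splits up (A ++ B ++ [:: x]) j.
Proof.
move=> hAB /andP [hj0 hjA] hlo hhi; apply/splitsP; split.
  by rewrite hj0 size_cat ltn_addr.
rewrite takel_cat ?(ltnW hjA) // drop_cat hjA => a b ha.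
rewrite !mem_cat mem_seq1 => /or3P [hb|hb|/eqP ->]; last exact: hlo.
- exact: lt_dir_trans (hlo a ha) (hhi b hb).
- exact: hAB (mem_take ha) hb.
Qed.

Lemma splits_rcons_high up s x i : splits up s i ->
  all (lt_dir up ^~ x) (take i s) -> splits up (rcons s x) i.
Proof.
move=> /splitsP [/andP [hi0 his] hsp] /allP hx; apply/splitsP; split.
  by rewrite hi0 size_rcons ltnS ltnW.
have szi : size (take i s) = i by rewrite size_takel // ltnW.
rewrite -cats1 -{1 2}(cat_take_drop i s) -catA take_size_cat // drop_size_cat // => a b ha.
by rewrite mem_cat mem_seq1 => /orP [hb|/eqP ->]; [exact: hsp | exact: hx].
Qed.

Lemma splits_rcons_low up s x : 0 < size s -> all (lt_dir up x) s ->
  splits (~~ up) (rcons s x) (size s).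
Proof.
move=> hs /allP hx; apply/splitsP; split; first by rewrite hs size_rcons /=.
rewrite -cats1 take_size_cat // drop_size_cat // => a b ha.
by rewrite mem_seq1 lt_dirN => /eqP ->; exact: hx.
Qed.

(* If [x] is neither above the whole first block nor below all of [s], cut the
   first block just before its first entry above [x]; an entry after that cut
   and below [x] would complete an occurrence of the opposite pattern. *)
Lemma splits_rcons up s x i : uniq (rcons s x) -> splits up s i ->
  ~ has2413 (~~ up) (rcons s x) ->
  exists j, splits up (rcons s x) j || splits (~~ up) (rcons s x) j.
Proof.
move=> hu hsplit hno; have /splitsP [/andP [hi0 his] hsp] := hsplit.
set A := take i s; set B := drop i s.
have hl : rcons s x = A ++ B ++ [:: x] by rewrite -cats1 catA cat_take_drop.
have xs : x \notin s by move: hu; rewrite rcons_uniq => /andP[].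
have cmp_x y : y \in s -> lt_dir up x y = ~~ lt_dir up y x.
  move=> hy; have yx : y != x by apply: contraNneq xs => <-.
  by case/orP: (lt_dir_total up yx) => h; rewrite h ?(negbTE (lt_dir_asym h)).
case hA: (all (lt_dir up ^~ x) A).
  by exists i; rewrite splits_rcons_high.
case hS: (all (lt_dir up x) s).
  by exists (size s); rewrite splits_rcons_low ?orbT // (ltn_trans hi0 his).
have hhas : has (lt_dir up x) A.
  move/negbT: hA; rewrite -has_predC => /hasP [a ha /= hna].
  by apply/hasP; exists a; rewrite // cmp_x ?hna // (mem_take ha).
set j := find (lt_dir up x) A.
have hjA : j < size A by rewrite -has_find.
have hfj : lt_dir up x (nth 0 A j) := nth_find 0 hhas.
case hD: (has (lt_dir up ^~ x) (drop j A)).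
  exfalso; apply: hno; rewrite hl.
  set q := find (lt_dir up ^~ x) (drop j A).
  have hq : q < size (drop j A) by rewrite -has_find.
  have hfq := nth_find 0 hD; rewrite -/q nth_drop in hfq.
  have hq0 : 0 < q.
    rewrite lt0n; apply/eqP => q0; move: hfq; rewrite q0 addn0.
    by apply/negP; exact: lt_dir_asym.
  apply: (has2413_rcons_split (j := j) (k := j + q)) => //.
    by rewrite -addn1 leq_add2l hq0 -ltn_subRL -size_drop.
  by rewrite size_drop subn_gt0.
exists j; apply/orP; left; rewrite hl; apply: splits_rcons_cut => //.
- rewrite hjA andbT lt0n; apply/eqP => j0.
  have [y hy hyx] : exists2 y, y \in s & lt_dir up y x.
    move/negbT: hS; rewrite -has_predC => /hasP [y hy /= hny].
    by exists y; rewrite // -[lt_dir _ _ _]negbK -cmp_x.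
  move: hy; rewrite -(cat_take_drop i s) mem_cat => /orP [hyA|hyB].
    by move/hasPn: (negbT hD) => /(_ y); rewrite j0 drop0 hyx => /(_ hyA).
  have := lt_dir_trans hfj (hsp _ _ (mem_nth 0 hjA) hyB).
  by rewrite cmp_x ?hyx // (mem_drop hyB).
- move=> a ha; have := allP (all_take_find (lt_dir up x) A) a ha.
  by rewrite /= cmp_x ?negbK // (mem_take (mem_take ha)).
- move=> a ha; rewrite cmp_x ?(mem_take (mem_drop ha)) //.
  by move/hasPn: (negbT hD); apply.
Qed.
Lemma separable_splits s : uniq s -> 1 < size s -> separable s ->
  exists up j, splits up s j.
Proof.
elim/last_ind: s => [|s x IH] // hu hs [h1 h2].
have hus : uniq s by move: hu; rewrite rcons_uniq => /andP[].
have sep_s : separable s.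
  by split => /(has2413_catl [:: x]); rewrite cats1.
have [hss|hss] := ltnP 1 (size s).
  have [up [j hj]] := IH hus hss sep_s.
  have hno : ~ has2413 (~~ up) (rcons s x) by case: up {hj}.
  by have [k /orP[] hk] := splits_rcons hu hj hno; [exists up | exists (~~ up)]; exists k.
case: s hs hu hss {IH hus sep_s h1 h2} => [|y [|z s]] //= _.
rewrite inE andbT => hyx _; exists (y < x), 1.
by rewrite /splits /= /lt_dir !andbT; move: hyx; rewrite neq_ltn; case: ltngtP.
Qed.

Lemma splits_catl up s t j : splits up s j ->
  {in s & t, forall x y, lt_dir up x y} -> splits up (s ++ t) j.
Proof.
move=> /splitsP [/andP [hj0 hjs] hs] hst; apply/splitsP; split.
  by rewrite hj0 size_cat (leq_trans hjs) // leq_addr.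
rewrite takel_cat ?(ltnW hjs) // drop_cat hjs => x y hx; rewrite mem_cat => /orP[hy|hy].
  exact: hs.
exact: hst (mem_take hx) hy.
Qed.

Lemma splits_take up s i j : splits up s j -> j < i -> splits up (take i s) j.
Proof.
move=> /splitsP [/andP [hj0 hjs] hs] hji; apply/splitsP; split.
  by rewrite hj0 size_take; case: ifP.
move=> x y; rewrite take_takel ?(ltnW hji) // => hx.
rewrite -{1}(subnK (ltnW hji)) -take_drop => hy.
exact: hs hx (mem_take hy).
Qed.

Lemma splits_map up f s j : {in s &, {mono f : x y / x < y}} ->
  splits up (map f s) j = splits up s j.
Proof.
move=> /(lt_dir_mono up) hf; apply/splitsP/splitsP; rewrite size_map => -[hj hs].
  split => // x y hx hy; rewrite -hf ?(mem_take hx) ?(mem_drop hy) //.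
  by apply: hs; rewrite -?map_take -?map_drop map_f.
split => // a b; rewrite -map_take -map_drop => /mapP [x hx ->] /mapP [y hy ->].
by rewrite hf ?(mem_take hx) ?(mem_drop hy) //; exact: hs.
Qed.

Lemma splitsN up s i j : splits up s i -> ~~ splits (~~ up) s j.
Proof.
move=> /splitsP [/andP [hi0 his] hs]; apply/negP => /splitsP [/andP [hj0 hjs] hs'].
have head_take k : 0 < k -> head 0 s \in take k s.
  by case: s {hs hs' hjs} his => // x s _; case: k => //= k _; rewrite mem_head.
have last_drop k : k < size s -> last 0 s \in drop k s.
  move=> hk; rewrite -{1}(cat_take_drop k s) last_cat.
  have : 0 < size (drop k s) by rewrite size_drop subn_gt0.
  by case: (drop k s) => // z t _; exact: mem_last.
have := hs' _ _ (head_take _ hj0) (last_drop _ hjs).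
by rewrite lt_dirN => /lt_dir_asym; rewrite hs ?head_take ?last_drop.
Qed.

(** * Permutations as sequences, direct and skew sums *)

Definition is_perm (s : seq nat) := perm_eq s (iota 0 (size s)).

Lemma is_perm_lt s x : is_perm s -> x \in s -> x < size s.
Proof. by move=> /perm_mem ->; rewrite mem_iota. Qed.

Lemma is_perm_uniq s : is_perm s -> uniq s.
Proof. by move=> /perm_uniq ->; exact: iota_uniq. Qed.

Lemma is_permP s : uniq s -> {in s, forall x, x < size s} -> is_perm s.
Proof.
move=> hu hs; apply: uniq_perm => //; first exact: iota_uniq.
have sub : {subset s <= iota 0 (size s)} by move=> x hx; rewrite mem_iota hs.
by have [_] := uniq_min_size hu sub (eq_leq (size_iota _ _)).
Qed.

Lemma is_perm_subn k t : perm_eq t (iota k (size t)) ->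
  is_perm (map (subn^~ k) t) /\ map (addn k) (map (subn^~ k) t) = t.
Proof.
move=> ht; split.
  have iotaE : iota 0 (size t) = map (subn^~ k) (iota k (size t)).
    by rewrite -{2}[k]addn0 iotaDl -map_comp (eq_map (addKn k)) map_id.
  by rewrite /is_perm size_map iotaE; exact: perm_map.
rewrite -map_comp -[RHS]map_id; apply/eq_in_map => x hx /=.
by rewrite subnKC //; move: hx; rewrite (perm_mem ht) mem_iota => /andP[].
Qed.

(* By pigeonhole, an entry of [s] at least [size s] would leave too little
   room above it for the entries of [t]. *)
Lemma is_perm_blocks s t : is_perm (s ++ t) -> {in s & t, forall x y, x < y} ->
  is_perm s /\ perm_eq t (iota (size s) (size t)).
Proof.
move=> hst hlt; move: (is_perm_uniq hst); rewrite cat_uniq => /and3P [us _ ut].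
have lt_N x : x \in s ++ t -> x < size s + size t.
  by rewrite -size_cat; exact: is_perm_lt.
have ps : is_perm s.
  apply: is_permP => // x hx; rewrite ltnNge; apply/negP => hsx.
  have hxN : x < size s + size t by apply: lt_N; rewrite mem_cat hx.
  have sub : {subset t <= iota x.+1 (size s + size t - x.+1)}.
    move=> y hy; have := lt_N y; rewrite mem_cat hy orbT mem_iota (hlt x y hx hy).
    by move/(_ isT); lia.
  have := uniq_leq_size ut sub; rewrite size_iota.
  by move: hsx hxN; set m := size s; set n := size t; lia.
split => //; rewrite -(perm_cat2l (iota 0 (size s))).
have -> : iota 0 (size s) ++ iota (size s) (size t) = iota 0 (size (s ++ t)).
  by rewrite size_cat iotaD add0n.
by apply: perm_trans hst; rewrite perm_cat2r perm_sym.
Qed.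

(* [sum_perm true a b] is the direct sum and [sum_perm false a b] the skew sum
   of [a] and [b]. *)
Definition sum_perm (up : bool) (a b : seq nat) : seq nat :=
  map (addn (~~ up * size b)) a ++ map (addn (up * size a)) b.

Lemma size_sum_perm up a b : size (sum_perm up a b) = size a + size b.
Proof. by rewrite size_cat !size_map. Qed.

Lemma addn_mono k (s : seq nat) : {in s &, {mono addn k : x y / x < y}}.
Proof. by move=> x y _ _; rewrite ltn_add2l. Qed.

Lemma sum_perm_sep up a b : is_perm a -> is_perm b ->
  {in map (addn (~~ up * size b)) a & map (addn (up * size a)) b,
    forall x y, lt_dir up x y}.
Proof.
move=> pa pb _ _ /mapP [x hx ->] /mapP [y hy ->].
have := is_perm_lt pa hx; have := is_perm_lt pb hy.
by case: up; rewrite /lt_dir /=; lia.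
Qed.

Lemma is_perm_sum_perm up a b : is_perm a -> is_perm b -> is_perm (sum_perm up a b).
Proof.
move=> pa pb; apply: is_permP.
  rewrite cat_uniq !map_inj_uniq ?is_perm_uniq //; try exact: addnI.
  rewrite andbT /=; apply/hasPn => y hy; apply/negP => hy'.
  by move: (sum_perm_sep pa pb hy' hy); case: up {hy hy'}; rewrite /lt_dir ltnn.
move=> x; rewrite size_sum_perm mem_cat => /orP [] /mapP [y hy ->].
  by have := is_perm_lt pa hy; case: up => /=; lia.
by have := is_perm_lt pb hy; case: up => /=; lia.
Qed.

Lemma splits_sum_perm up a b : is_perm a -> is_perm b -> 0 < size a -> 0 < size b ->
  splits up (sum_perm up a b) (size a).
Proof.
move=> pa pb ha hb; apply/splitsP; split.
  by rewrite size_sum_perm ha -{1}[size a]addn0 ltn_add2l.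
rewrite /sum_perm take_size_cat ?drop_size_cat ?size_map //.
exact: sum_perm_sep.
Qed.

Lemma splits_sum_perml up a b j : is_perm a -> is_perm b ->
  splits up a j -> splits up (sum_perm up a b) j.
Proof.
move=> pa pb hj; apply: splits_catl; last exact: sum_perm_sep.
by rewrite splits_map //; exact: addn_mono.
Qed.

Lemma separable_sum_perm up a b : is_perm a -> is_perm b ->
  separable (sum_perm up a b) <-> separable a /\ separable b.
Proof.
move=> pa pb; split => [hs|[sa sb]].
  split.
    rewrite -(separable_map (@addn_mono (~~ up * size b) a)).
    by move/(separable_take (size a)): hs; rewrite /sum_perm take_size_cat ?size_map.
  rewrite -(separable_map (@addn_mono (up * size a) b)).
  by move/(separable_drop (size a)): hs; rewrite /sum_perm drop_size_cat ?size_map.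
rewrite /sum_perm; apply: (separable_cat (sum_perm_sep pa pb)).
  exact/(separable_map (@addn_mono _ a)).
exact/(separable_map (@addn_mono _ b)).
Qed.

Lemma sum_perm_inj up a b a' b' : size a = size a' ->
  sum_perm up a b = sum_perm up a' b' -> a = a' /\ b = b'.
Proof.
move=> ha e; have : size b = size b'.
  by move/(congr1 size): e; rewrite !size_sum_perm ha => /addnI.
move: e => /eqP; rewrite /sum_perm eqseq_cat ?size_map // ha => /andP [/eqP ea /eqP eb] hb.
by rewrite hb in ea eb; split; apply: inj_map ea || apply: inj_map eb; exact: addnI.
Qed.

Lemma sum_perm_of_splits up s i : is_perm s -> splits up s i ->
  exists a b, [/\ is_perm a, is_perm b, size a = i & s = sum_perm up a b].
Proof.
move=> ps /splitsP [/andP [hi0 his] hsplit].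
have szt : size (take i s) = i by rewrite size_takel // ltnW.
have map_add0 (t : seq nat) : map (addn 0) t = t by rewrite (eq_map add0n) map_id.
case: up hsplit => hsplit.
  rewrite -(cat_take_drop i s) in ps.
  have [pa pb] := is_perm_blocks ps hsplit.
  have [pb' eb] := is_perm_subn pb.
  exists (take i s), (map (subn^~ (size (take i s))) (drop i s)); split => //.
  by rewrite /sum_perm /= mul0n mul1n eb map_add0 cat_take_drop.
have pdt : is_perm (drop i s ++ take i s).
  rewrite /is_perm size_cat addnC -size_cat cat_take_drop.
  by rewrite perm_catC cat_take_drop.
have [pb pa] := is_perm_blocks pdt (fun y x hy hx => hsplit x y hx hy).
have [pa' ea] := is_perm_subn pa.
exists (map (subn^~ (size (drop i s))) (take i s)), (drop i s).
split => //; first by rewrite size_map.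
by rewrite /sum_perm /= mul0n mul1n ea map_add0 cat_take_drop.
Qed.

Fixpoint descents (s : seq nat) : nat :=
  if s is x :: t then (if t is y :: _ then (y < x) + descents t else 0) else 0.

Lemma descents_cat s t : s != [::] -> t != [::] ->
  descents (s ++ t) = descents s + descents t + (head 0 t < last 0 s).
Proof.
elim: s => [|x [|y s] IH] // _ ht.
  by clear IH; case: t ht => [|z t] //= _; rewrite addnC.
have -> : descents ((x :: y :: s) ++ t) = (y < x) + descents ((y :: s) ++ t) by [].
by rewrite IH // !addnA.
Qed.

Lemma descents_map f s : {in s &, {mono f : x y / x < y}} ->
  descents (map f s) = descents s.
Proof.
elim: s => [|x [|y s] IH] //= hf.
rewrite hf ?inE ?eqxx ?orbT //; congr (_ + _).
by apply: IH => a b ha hb; apply: hf; rewrite inE ?ha ?hb orbT.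
Qed.

Lemma descents_sum_perm up a b : is_perm a -> is_perm b ->
  0 < size a -> 0 < size b -> descents (sum_perm up a b) = descents a + descents b + ~~ up.
Proof.
case: a => // x a; case: b => // y b pa pb _ _.
rewrite /sum_perm descents_cat // !descents_map; try exact: addn_mono.
congr (_ + _ + _); apply: congr1; rewrite /= (last_map _ a x).
have := is_perm_lt pa (mem_last x a); have := is_perm_lt pb (mem_head y b).
by case: up => /= hy hx; [apply/negbTE; rewrite -leqNgt | apply/idP]; lia.
Qed.

Lemma descents_sum (s : seq nat) :
  \sum_(i < (size s).-1) (nth 0 s i.+1 < nth 0 s i) = descents s.
Proof.
elim: s => [|x [|y t] IH]; rewrite ?big_ord0 //.
have -> : descents [:: x, y & t] = (y < x) + descents (y :: t) by [].
by rewrite big_ord_recl -IH.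
Qed.

(** * Separable permutations and di-sk trees *)

Fixpoint disk (T : tree) : bool :=
  if T is Node up L R then
    [&& disk L, disk R & if R is Node up' _ _ then up != up' else true]
  else true.

Lemma all_chains_root (P : pred (seq bool)) T : P [::] ->
  all P (chains true T) = P (spine T) && all P (chains false T).
Proof. by case: T => [|up L R] //= ->. Qed.

Lemma is_diskE T : is_disk T = disk T.
Proof.
have chainsE U : all alternating (chains false U) && alternating (spine U) = disk U.
  elim: U => [|up L IL R IR] //; rewrite [chains _ _]/= [spine _]/= [disk _]/=.
  have -> : alternating (up :: spine R) =
      (if R is Node up' _ _ then up != up' else true) && alternating (spine R).
    by case: R {IR}.
  rewrite all_cat all_chains_root // -IL -IR.
  by case: (all _ (chains false L)); case: (alternating _); case: (all _ _);
    case: (alternating _); case: (if R is Node _ _ _ then _ else _).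
by rewrite /is_disk /right_chains all_chains_root // andbC chainsE.
Qed.

Fixpoint perm_of_tree (T : tree) : seq nat :=
  if T is Node up L R then sum_perm up (perm_of_tree R) (perm_of_tree L) else [:: 0].

Fixpoint count_labels (p : pred bool) (T : tree) : nat :=
  if T is Node up L R then p up + count_labels p L + count_labels p R else 0.

Lemma is_perm_of_tree T : is_perm (perm_of_tree T).
Proof. by elim: T => [|up L IL R IR] //=; exact: is_perm_sum_perm. Qed.

Lemma size_perm_of_tree T : size (perm_of_tree T) = (nnodes T).+1.
Proof. by elim: T => [|up L IL R IR] //=; rewrite size_sum_perm IL IR; lia. Qed.

Lemma perm_of_tree_gt0 T : 0 < size (perm_of_tree T).
Proof. by rewrite size_perm_of_tree. Qed.

Lemma descents_perm_of_tree T : descents (perm_of_tree T) = count_labels negb T.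
Proof.
elim: T => [|up L IL R IR] //=.
by rewrite descents_sum_perm ?is_perm_of_tree ?perm_of_tree_gt0 // IL IR; lia.
Qed.

Lemma separable_perm_of_tree T : separable (perm_of_tree T).
Proof.
elim: T => [|up L IL R IR] /=.
  by split=> -[i0 [i1 [i2 [i3 [h01 h12 h23 h3 _]]]]]; rewrite /= in h3; lia.
by apply/separable_sum_perm; rewrite ?is_perm_of_tree.
Qed.

(* The right child carries the opposite label, so the first block of the
   decomposition at a node cannot itself split in the direction of the node. *)
Lemma disk_no_early_split up L R j : disk (Node up L R) ->
  j < size (perm_of_tree R) -> ~~ splits up (perm_of_tree (Node up L R)) j.
Proof.
move=> /and3P [_ _ hR] hj; apply/negP => hs; move: (splits_take hs hj) => {hs}.
rewrite /= /sum_perm take_size_cat ?size_map // splits_map; last exact: addn_mono.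
case: R hR hj => [|up' L' R'] hR hj.
  by move: hj => /= /ltnSE; rewrite leqn0 => /eqP ->.
have -> : up = ~~ up' by case: up up' hR {hj} => -[].
apply/negP; apply: (splitsN (i := size (perm_of_tree R'))).
by apply: splits_sum_perm; rewrite ?is_perm_of_tree ?perm_of_tree_gt0.
Qed.

Lemma perm_of_tree_inj T1 T2 : disk T1 -> disk T2 ->
  perm_of_tree T1 = perm_of_tree T2 -> T1 = T2.
Proof.
elim: T1 T2 => [|up L IL R IR] [|up2 L2 R2] //;
  try by move=> _ _ /(congr1 size); rewrite !size_perm_of_tree.
move=> d1 d2 e; have /and3P [dL dR _] := d1; have /and3P [dL2 dR2 _] := d2.
have split1 : splits up (perm_of_tree (Node up L R)) (size (perm_of_tree R)).
  by apply: splits_sum_perm; rewrite ?is_perm_of_tree ?perm_of_tree_gt0.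
have split2 : splits up2 (perm_of_tree (Node up L R)) (size (perm_of_tree R2)).
  by rewrite e; apply: splits_sum_perm; rewrite ?is_perm_of_tree ?perm_of_tree_gt0.
have eup : up2 = up.
  apply/eqP; apply: contraTT split2 => hne.
  by rewrite (_ : up2 = ~~ up); [exact: splitsN split1 | move: hne; case: (up2); case: (up)].
subst up2.
have esz : size (perm_of_tree R) = size (perm_of_tree R2).
  case: (ltngtP (size (perm_of_tree R)) (size (perm_of_tree R2))) => // hlt.
    by move: (disk_no_early_split d2 hlt); rewrite -e split1.
  by move: (disk_no_early_split d1 hlt); rewrite split2.
have [eR eL] := sum_perm_inj esz e.
by rewrite (IL L2 dL dL2 eL) (IR R2 dR dR2 eR).
Qed.

(* Decompose at the first split point: by minimality, the first block, which
   becomes the right subtree, cannot split in the same direction. *)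
Lemma perm_of_tree_surj s : 0 < size s -> is_perm s -> separable s ->
  exists2 T, disk T & perm_of_tree T = s.
Proof.
have [n] := ubnP (size s); elim: n s => // n IH s /ltnSE le_s s0 ps sep_s.
have [s1|s2] := leqP (size s) 1.
  exists Leaf => //; case: s s0 ps s1 {IH le_s sep_s} => [|x [|y s]] // _ ps _.
  by have := is_perm_lt ps (mem_head x [::]); rewrite ltnS leqn0 => /eqP ->.
have [up ex_split] := separable_splits (is_perm_uniq ps) s2 sep_s.
case: (ex_minnP ex_split) => i hi imin.
have /andP [/andP [i_gt0 i_lt] _] := hi.
have [a [b [pa pb sza es]]] := sum_perm_of_splits ps hi.
have [sa sb] : separable a /\ separable b by rewrite -(separable_sum_perm up pa pb) -es.
have szb : size b = size s - i by rewrite es size_sum_perm sza addKn.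
have [R dR eR] : exists2 R, disk R & perm_of_tree R = a.
  by apply: IH; rewrite ?sza //; lia.
have [L dL eL] : exists2 L, disk L & perm_of_tree L = b.
  by apply: IH; rewrite ?szb //; lia.
exists (Node up L R); last by rewrite /= eL eR es.
rewrite /= dL dR /=; case: R eR {dR} => [|up' L' R'] //= eR.
apply/negP => /eqP eup; subst up'.
have : splits up s (size (perm_of_tree R')).
  rewrite es; apply: splits_sum_perml => //; rewrite -eR.
  by apply: splits_sum_perm; rewrite ?is_perm_of_tree ?perm_of_tree_gt0.
move/imin; rewrite -sza -eR size_sum_perm; apply/negP; rewrite -ltnNge.
by rewrite -{1}[size (perm_of_tree R')]addn0 ltn_add2l perm_of_tree_gt0.
Qed.

Section SeqOfPerm.
Variable n : nat.

Definition seq_of_perm (pi : {perm 'I_n.+1}) : seq nat :=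
  [seq pval pi i | i <- enum 'I_n.+1].

Lemma size_seq_of_perm pi : size (seq_of_perm pi) = n.+1.
Proof. by rewrite size_map size_enum_ord. Qed.

Lemma nth_seq_of_perm pi (i : 'I_n.+1) : nth 0 (seq_of_perm pi) i = pval pi i.
Proof. by rewrite (nth_map ord0) ?size_enum_ord // nth_ord_enum. Qed.

Lemma is_perm_seq_of_perm pi : is_perm (seq_of_perm pi).
Proof.
apply: is_permP; first by rewrite map_inj_uniq ?enum_uniq // => x y /val_inj /perm_inj.
by move=> _ /mapP [i _ ->]; rewrite size_seq_of_perm ltn_ord.
Qed.

Lemma seq_of_perm_inj : injective seq_of_perm.
Proof.
move=> p1 p2 e; apply/permP => i; apply: val_inj.
by rewrite -/(pval p1 i) -/(pval p2 i) -!nth_seq_of_perm e.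
Qed.

Lemma seq_of_perm_surj s : size s = n.+1 -> is_perm s -> exists pi, seq_of_perm pi = s.
Proof.
move=> hs ps.
have lt_s (i : 'I_n.+1) : nth 0 s i < n.+1.
  by rewrite -{2}hs; apply: is_perm_lt ps _; rewrite mem_nth // hs.
have f_inj : injective (fun i : 'I_n.+1 => Ordinal (lt_s i)).
  move=> i j /(congr1 val) /= /eqP; rewrite nth_uniq ?hs ?is_perm_uniq //.
  by move/eqP/val_inj.
exists (perm f_inj); apply: (@eq_from_nth _ 0); rewrite size_seq_of_perm ?hs // => j hj.
by rewrite -[j]/(val (Ordinal hj)) nth_seq_of_perm /pval permE.
Qed.

Lemma des_seq_of_perm pi : des pi = descents (seq_of_perm pi).
Proof. by rewrite /des -descents_sum size_seq_of_perm. Qed.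

Definition pat_dir (up : bool) : 'I_4 -> nat := if up then pat2413 else pat3142.

Let v4 (v0 v1 v2 v3 : nat) (a : 'I_4) := nth 0 [:: v0; v1; v2; v3] a.

Lemma ord4_cases (P : 'I_4 -> Prop) :
  P (inord 0) -> P (inord 1) -> P (inord 2) -> P (inord 3) -> forall a, P a.
Proof.
move=> h0 h1 h2 h3 a; rewrite -(inord_val a).
by case: a => -[|[|[|[|a]]]] ha //=.
Qed.

Lemma shape2413_pat up v0 v1 v2 v3 : shape2413 up v0 v1 v2 v3 <->
  forall a b : 'I_4, (v4 v0 v1 v2 v3 a < v4 v0 v1 v2 v3 b) = (pat_dir up a < pat_dir up b).
Proof.
split.
  move=> /and3P [h1 h2 h3]; apply: ord4_cases; apply: ord4_cases;
  by case: up h1 h2 h3 => h1 h2 h3; rewrite /v4 /pat_dir /pat2413 /pat3142 !inordK //=;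
    rewrite /lt_dir in h1 h2 h3; lia.
move=> H; rewrite /shape2413 /lt_dir.
case: up H => H.
  have := H (inord 2) (inord 0); have := H (inord 0) (inord 3).
  have := H (inord 3) (inord 1).
  by rewrite /v4 /pat_dir /pat2413 !inordK //= => -> -> ->.
have := H (inord 0) (inord 2); have := H (inord 3) (inord 0).
have := H (inord 1) (inord 3).
by rewrite /v4 /pat_dir /pat3142 !inordK //= => -> -> ->.
Qed.

Lemma contains_patE up pi : contains_pat (pat_dir up) pi <-> has2413 up (seq_of_perm pi).
Proof.
set s := seq_of_perm pi; split.
  move/existsP => [f /forallP H].
  have Hab (a b : 'I_4) : ((a < b) ==> (f a < f b)) &&
      ((pval pi (f a) < pval pi (f b)) == (pat_dir up a < pat_dir up b)).
    exact: forallP (H a) b.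
  pose g k := val (f (inord k)).
  have g_lt k k' : k < k' -> k' < 4 -> g k < g k'.
    move=> h1 h2; have := Hab (inord k) (inord k').
    by rewrite !inordK ?h1 ?(ltn_trans h1 h2) //= => /andP [].
  exists (g 0), (g 1), (g 2), (g 3); split; try exact: g_lt.
    by rewrite size_seq_of_perm ltn_ord.
  apply/shape2413_pat => a b.
  have vE c : v4 (nth 0 s (g 0)) (nth 0 s (g 1)) (nth 0 s (g 2)) (nth 0 s (g 3)) c =
      pval pi (f c).
    by apply: (ord4_cases (P := fun c => v4 _ _ _ _ c = _));
      rewrite /v4 /g !nth_seq_of_perm inordK.
  by rewrite !vE; case/andP: (Hab a b) => _ /eqP.
move=> [i0 [i1 [i2 [i3 [h01 h12 h23 h3 hR]]]]]; rewrite size_seq_of_perm in h3.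
pose ix (a : 'I_4) := nth 0 [:: i0; i1; i2; i3] a.
have ix_lt a : ix a < n.+1.
  by apply: (ord4_cases (P := fun a => ix a < n.+1)); rewrite /ix inordK //=; lia.
pose f := [ffun a => Ordinal (ix_lt a)].
have fE a : val (f a) = ix a by rewrite ffunE.
apply/existsP; exists f; apply/forallP => a; apply/forallP => b; apply/andP; split.
  apply/implyP; rewrite !fE; move: a b.
  apply: (ord4_cases (P := fun a => forall b : 'I_4, a < b -> ix a < ix b));
  apply: (ord4_cases (P := fun b => _ < b -> _ < ix b)); rewrite /ix !inordK //=; lia.
have vE c : v4 (nth 0 s i0) (nth 0 s i1) (nth 0 s i2) (nth 0 s i3) c = nth 0 s (ix c).
  by apply: (ord4_cases (P := fun c => v4 _ _ _ _ c = _)); rewrite /v4 /ix inordK.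
apply/eqP; rewrite -!nth_seq_of_perm !fE -!vE.
exact: (shape2413_pat _ _ _ _ _).1 hR a b.
Qed.

Lemma avoidsE pi : avoids_2413_3142 pi <-> separable (seq_of_perm pi).
Proof.
rewrite /avoids_2413_3142 /separable -(contains_patE true) -(contains_patE false).
by split => [/andP [/negP h1 /negP h2] | [h1 h2]] //; apply/andP; split; apply/negP.
Qed.

End SeqOfPerm.

Fixpoint tree_eqb (T1 T2 : tree) : bool :=
  match T1, T2 with
  | Leaf, Leaf => true
  | Node a L R, Node b L' R' => [&& a == b, tree_eqb L L' & tree_eqb R R']
  | _, _ => false
  end.

Lemma tree_eqP : Equality.axiom tree_eqb.
Proof.
elim=> [|a L IHL R IHR] [|b L' R'] /=; try by constructor.
case: eqP => [->|nab]; last by constructor => -[].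
case: IHL => [->|nL]; last by constructor => -[].
by case: IHR => [->|nR]; constructor => // -[].
Qed.

HB.instance Definition _ := hasDecEq.Build tree tree_eqP.

Definition left_tree (T : tree) := if T is Node _ L _ then L else Leaf.
Definition right_tree (T : tree) := if T is Node _ _ R then R else Leaf.

Definition nodes_of (ts : nat -> seq tree) (m : nat) : seq tree :=
  flatten [seq flatten [seq flatten [seq [:: Node true L R; Node false L R]
    | R <- ts (m - i)] | L <- ts i] | i <- iota 0 m.+1].

(* [trees_fuel f m] lists the trees with [m] nodes provided [m <= f]. *)
Fixpoint trees_fuel (f m : nat) : seq tree :=
  match f, m with
  | _, 0 => [:: Leaf]
  | 0, _.+1 => [::]
  | f'.+1, m'.+1 => nodes_of (trees_fuel f') m'
  end.

Definition trees (m : nat) : seq tree := trees_fuel m m.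

Lemma nodes_of_ext ts ts' m : (forall i, i <= m -> ts i = ts' i) ->
  nodes_of ts m = nodes_of ts' m.
Proof.
move=> H; congr flatten; apply/eq_in_map => i.
by rewrite mem_iota /= ltnS => hi; rewrite !H // leq_subr.
Qed.

Lemma trees_fuel_irr f g m : m <= f -> m <= g -> trees_fuel f m = trees_fuel g m.
Proof.
elim: f g m => [|f IH] [|g] [|m] //= hf hg; apply: nodes_of_ext => i hi.
by apply: IH; exact: leq_trans hi _.
Qed.

Lemma treesS m : trees m.+1 = nodes_of trees m.
Proof. by apply: nodes_of_ext => i hi; apply: trees_fuel_irr. Qed.

Lemma mem_nodes_of ts m T : (T \in nodes_of ts m) =
  if T is Node _ L R then has (fun i => (L \in ts i) && (R \in ts (m - i))) (iota 0 m.+1)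
  else false.
Proof.
case: T => [|up L R].
  apply/negbTE/flattenP.
  by case=> _ /mapP [i _ ->] /flattenP [_ /mapP [L _ ->] /flattenP [_ /mapP [R _ ->]]].
apply/flattenP/hasP => [|[i hi /andP [hL hR]]].
  move=> [_ /mapP [i hi ->] /flattenP [_ /mapP [L' hL ->] /flattenP [_ /mapP [R' hR ->]]]].
  by rewrite !inE => /orP[] /eqP [_ -> ->]; exists i; rewrite ?hL.
exists (flatten [seq flatten [seq [:: Node true L' R'; Node false L' R'] | R' <- ts (m - i)]
  | L' <- ts i]); first by apply/mapP; exists i.
apply/flattenP; exists (flatten [seq [:: Node true L R'; Node false L R'] | R' <- ts (m - i)]).
  by apply/mapP; exists L.
apply/flattenP; exists [:: Node true L R; Node false L R]; first by apply/mapP; exists R.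
by case: up; rewrite !inE eqxx ?orbT.
Qed.

Lemma mem_trees m T : (T \in trees m) = (nnodes T == m).
Proof.
elim: T m => [|up L IL R IR] [|m] //; rewrite treesS mem_nodes_of //.
rewrite [nnodes _]/= eqSS.
apply/hasP/eqP => [[i] | <-].
  by rewrite mem_iota IL IR => /andP [_ hi] /andP [/eqP hL /eqP hR]; lia.
by exists (nnodes L); rewrite ?mem_iota ?ltnS ?leq_addr // IL IR addKn !eqxx.
Qed.

Lemma uniq_flatten_map (I T : eqType) (g : I -> seq T) (key : T -> I) (s : seq I) :
  uniq s -> {in s, forall i, uniq (g i)} ->
  {in s, forall i, {in g i, forall x, key x = i}} -> uniq (flatten (map g s)).
Proof.
elim: s => //= i s IH /andP [his us] ug hkey.
rewrite cat_uniq ug ?mem_head //= IH //; first last.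
- by move=> j hj; apply: hkey; rewrite inE hj orbT.
- by move=> j hj; apply: ug; rewrite inE hj orbT.
rewrite andbT; apply/hasPn => x /flattenP [_ /mapP [j hj ->] hx]; apply/negP => hxi.
by move: his; rewrite -(hkey i _ x) ?mem_head // (hkey j _ x) ?inE ?hj ?orbT.
Qed.

Lemma uniq_trees m : uniq (trees m).
Proof.
elim/ltn_ind: m => -[|m] IH //; rewrite treesS.
apply: (uniq_flatten_map (key := nnodes \o left_tree)); first exact: iota_uniq.
  move=> i; rewrite mem_iota /= ltnS => hi.
  apply: (uniq_flatten_map (key := left_tree)); first exact: IH.
    move=> L _; apply: (uniq_flatten_map (key := right_tree)).
    - by apply: IH; rewrite ltnS leq_subr.
    - by move=> R _.
    - by move=> R _ x; rewrite !inE => /orP[] /eqP ->.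
  by move=> L _ x /flattenP [_ /mapP [R _ ->]]; rewrite !inE => /orP[] /eqP ->.
move=> i _ x /flattenP [_ /mapP [L hL ->] /flattenP [_ /mapP [R _ ->]]].
by rewrite mem_trees in hL; rewrite !inE => /orP[] /eqP -> /=; apply/eqP.
Qed.

Lemma In_mem (T : eqType) (x : T) (s : seq T) : List.In x s <-> x \in s.
Proof.
elim: s => [|y s IH] //=; rewrite inE; split.
  by move=> [->|/IH ->]; rewrite ?eqxx ?orbT.
by move=> /orP [/eqP ->|/IH]; [left | right].
Qed.

Lemma uniq_NoDup (T : eqType) (s : seq T) : uniq s -> List.NoDup s.
Proof.
elim: s => [|x s IH] /=; first by constructor.
by move=> /andP [hx hu]; constructor; [rewrite In_mem; exact/negP | exact: IH].
Qed.

Lemma card_trees_count (P : pred tree) s : uniq s -> {subset P <= s} ->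
  card_trees P (count P s).
Proof.
move=> us sub; exists (filter P s); split; [|split].
- exact/uniq_NoDup/filter_uniq.
- move=> T; rewrite In_mem mem_filter; split => [/andP [] // | hT].
  by rewrite hT; exact: sub.
- by rewrite -size_filter; elim: (filter P s) => //= T t ->.
Qed.

(** * Exchanging weights of right chains *)

Fixpoint bool_seqs (l : nat) : seq (seq bool) :=
  if l is l'.+1 then [seq b :: c | b <- [:: true; false], c <- bool_seqs l'] else [:: [::]].

Fixpoint alt_seq (b : bool) (l : nat) : seq bool :=
  if l is l'.+1 then b :: alt_seq (~~ b) l' else [::].

Lemma size_alt_seq b l : size (alt_seq b l) = l.
Proof. by elim: l b => //= l IH b; rewrite IH. Qed.

Lemma count_negb_alt_seq l :
  count negb (alt_seq true l) = l./2 /\ count negb (alt_seq false l) = uphalf l.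
Proof. by elim: l => [|l [IH1 IH2]] //=; rewrite IH1 IH2 uphalfE add1n. Qed.

Section ChainWeights.
Local Open Scope ring_scope.
Variable S : comPzSemiRingType.
Implicit Types (w z : seq bool -> S) (T : tree).

Definition len_sum w (l : nat) : S := \sum_(c <- bool_seqs l) w c.

Lemma len_sumS w l :
  len_sum w l.+1 = len_sum (fun c => w (true :: c) + w (false :: c)) l.
Proof. by rewrite /len_sum big_allpairs_dep big_cons big_seq1 [RHS]big_split. Qed.

Definition rooted_weight w z T : S := z (spine T) * \prod_(c <- chains false T) w c.

Lemma rooted_weight_node w z up L R :
  rooted_weight w z (Node up L R) =
  (\prod_(c <- chains true L) w c) * rooted_weight w (fun c => z (up :: c)) R.
Proof. by rewrite /rooted_weight /= big_cat mulrCA. Qed.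

Lemma rooted_weightD w z1 z2 T :
  rooted_weight w (fun c => z1 c + z2 c) T = rooted_weight w z1 T + rooted_weight w z2 T.
Proof. by rewrite /rooted_weight mulrDl. Qed.

Lemma prod_chains_rooted w T : w [::] = 1 ->
  \prod_(c <- chains true T) w c = rooted_weight w w T.
Proof.
by move=> w0; rewrite /rooted_weight; case: T => [|up L R] /=;
  rewrite ?big_nil ?w0 ?mulr1 // big_cons.
Qed.

Lemma sum_nodes_of ts m (F : tree -> S) :
  \sum_(T <- nodes_of ts m) F T = \sum_(i <- iota 0 m.+1) \sum_(L <- ts i)
     \sum_(R <- ts (m - i)%N) (F (Node true L R) + F (Node false L R)).
Proof.
rewrite /nodes_of big_flatten big_map; apply: eq_bigr => i _.
rewrite big_flatten big_map; apply: eq_bigr => L _.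
by rewrite big_flatten big_map; apply: eq_bigr => R _; rewrite big_cons big_seq1.
Qed.

(* The labels of the root chain vary independently of the rest of the tree;
   induct on the size with the weight [z] of the root chain generalized. *)
Lemma sum_rooted_weight_eq x y : x [::] = 1 -> y [::] = 1 ->
  (forall l, len_sum x l = len_sum y l) ->
  forall m z z', (forall l, len_sum z l = len_sum z' l) ->
  \sum_(T <- trees m) rooted_weight x z T = \sum_(T <- trees m) rooted_weight y z' T.
Proof.
move=> x0 y0 hxy m; elim/ltn_ind: m => -[|m] IH z z' hz.
  rewrite !big_seq1 /rooted_weight !big_nil !mulr1.
  by have := hz 0%N; rewrite /len_sum !big_seq1.
rewrite treesS !sum_nodes_of; apply: eq_big_seq => i; rewrite mem_iota ltnS => /andP [_ hi].
have split_node w zz k1 k2 : w [::] = 1 ->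
    \sum_(L <- trees k1) \sum_(R <- trees k2)
      (rooted_weight w zz (Node true L R) + rooted_weight w zz (Node false L R)) =
    (\sum_(L <- trees k1) rooted_weight w w L) *
    \sum_(R <- trees k2) rooted_weight w (fun c => zz (true :: c) + zz (false :: c)) R.
  move=> w0; rewrite mulr_suml; apply: eq_bigr => L _; rewrite mulr_sumr.
  apply: eq_bigr => R _.
  by rewrite !rooted_weight_node -mulrDr rooted_weightD prod_chains_rooted.
rewrite !split_node //; congr (_ * _); apply: IH => //; rewrite ?ltnS ?leq_subr //.
by move=> l; rewrite -!len_sumS.
Qed.

Lemma sum_chain_weights_eq x y m : x [::] = 1 -> y [::] = 1 ->
  (forall l, len_sum x l = len_sum y l) ->
  \sum_(T <- trees m) \prod_(c <- right_chains T) x c =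
  \sum_(T <- trees m) \prod_(c <- right_chains T) y c.
Proof.
move=> x0 y0 hxy; under eq_bigr => T _ do rewrite prod_chains_rooted //.
under [RHS]eq_bigr => T _ do rewrite prod_chains_rooted //.
exact: sum_rooted_weight_eq.
Qed.

Lemma sum_path_alt (g : seq bool -> S) l b :
  \sum_(c <- bool_seqs l) (path (fun a b : bool => a != b) b c)%:R * g c =
  g (alt_seq (~~ b) l).
Proof.
elim: l g b => [|l IH] g b; first by rewrite big_seq1 mul1r.
rewrite big_allpairs_dep big_cons big_seq1; case: b => /=.
  rewrite big1 ?add0r => [|c _]; last by rewrite mul0r.
  exact: (IH (fun c => g (false :: c)) false).
rewrite [X in _ + X]big1 ?addr0 => [|c _]; last by rewrite mul0r.
exact: (IH (fun c => g (true :: c)) true).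
Qed.

Lemma sum_alternating (g : seq bool -> S) l :
  \sum_(c <- bool_seqs l.+1) (alternating c)%:R * g c =
  g (alt_seq true l.+1) + g (alt_seq false l.+1).
Proof.
rewrite big_allpairs_dep big_cons big_seq1 /=.
by rewrite (sum_path_alt (fun c => g (true :: c))) (sum_path_alt (fun c => g (false :: c))).
Qed.

Lemma prod_indicator (I : Type) (cs : seq I) (b : pred I) (F : I -> S) :
  \prod_(c <- cs) ((b c)%:R * F c) = (all b cs)%:R * \prod_(c <- cs) F c.
Proof.
elim: cs => [|c cs IH]; first by rewrite !big_nil mul1r.
by rewrite !big_cons IH /= -mulnb natrM mulrACA.
Qed.

End ChainWeights.

(** * The gamma expansion *)

Lemma sum_chains_root (f : seq bool -> nat) T : f [::] = 0 ->
  \sum_(c <- chains true T) f c = \sum_(c <- chains false T) f c + f (spine T).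
Proof.
by case: T => [|up L R] /= f0; rewrite ?big_nil ?f0 // big_cons addnC.
Qed.

Lemma sum_count_chains (p : pred bool) T :
  \sum_(c <- right_chains T) count p c = count_labels p T.
Proof.
rewrite /right_chains sum_chains_root //.
elim: T => [|up L IL R IR] /=; first by rewrite big_nil.
by rewrite big_cat sum_chains_root // -IL -IR /=; lia.
Qed.

Lemma sum_size_chains T : \sum_(c <- right_chains T) size c = nnodes T.
Proof.
under eq_bigr do rewrite -count_predT.
by rewrite sum_count_chains; elim: T => //= up L -> R ->; rewrite add1n.
Qed.

Lemma sum_half (cs : seq (seq bool)) :
  (\sum_(c <- cs) (size c)./2).*2 + \sum_(c <- cs) odd (size c) = \sum_(c <- cs) size c.
Proof.
elim: cs => [|c cs IH]; first by rewrite !big_nil.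
rewrite !big_cons doubleD -{3}(odd_double_half (size c)) -IH; lia.
Qed.

Lemma r_oE T : r_o T = \sum_(c <- right_chains T) odd (size c).
Proof. by rewrite /r_o -sumn_count sumnE big_map. Qed.

Section Expansion.
Local Open Scope ring_scope.

Definition des_weight (c : seq bool) : {poly int} := (alternating c)%:R * 'X^(count negb c).

Definition odd_plus (c : seq bool) := odd (size c) ==> (head false c == true).

Definition gamma_weight (c : seq bool) : {poly int} :=
  (alternating c && odd_plus c)%:R * ('X^((size c)./2) * (1 + 'X) ^+ odd (size c)).

Lemma len_sum_des_gamma l : len_sum des_weight l = len_sum gamma_weight l.
Proof.
case: l => [|l].
  by rewrite /len_sum !big_seq1 /des_weight /gamma_weight /= !expr0 !mulr1.
rewrite /len_sum sum_alternating.
under eq_bigr do rewrite /gamma_weight -mulnb natrM -mulrA.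
rewrite sum_alternating /odd_plus !size_alt_seq.
have [c1 c2] := count_negb_alt_seq l.+1.
rewrite c1 c2 uphalf_half /=.
case: (odd l) => /=; rewrite ?mul1r ?mul0r ?expr0 ?expr1 ?mulr1 ?addr0 //.
by rewrite add1n exprS mulrDr mulr1 mulrC.
Qed.

Lemma prod_des_weight T :
  \prod_(c <- right_chains T) des_weight c = (disk T)%:R * 'X^(count_labels negb T).
Proof. by rewrite prod_indicator prodrXr sum_count_chains -is_diskE. Qed.

Lemma prod_gamma_weight T :
  \prod_(c <- right_chains T) gamma_weight c =
  (is_disk T && all odd_plus (right_chains T))%:R *
  ('X^(\sum_(c <- right_chains T) (size c)./2) * (1 + 'X) ^+ r_o T).
Proof. by rewrite prod_indicator big_split /= !prodrXr all_predI r_oE. Qed.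

Lemma prod_gamma_weight_expansion n T : nnodes T = n ->
  \prod_(c <- right_chains T) gamma_weight c =
  \sum_(k < n./2.+1) (in_DT1 n.+1 k T)%:R * ('X^k * (1 + 'X) ^+ (n - 2 * k)).
Proof.
move=> hT; rewrite prod_gamma_weight.
set h := \sum_(c <- right_chains T) (size c)./2.
have hs : (h.*2 + r_o T = n)%N by rewrite r_oE sum_half sum_size_chains.
have in_DT1E k : in_DT1 n.+1 k T =
    (is_disk T && all odd_plus (right_chains T)) && (r_o T == n - 2 * k)%N.
  by rewrite /in_DT1 /in_DT hT eqxx andbT -andbA [(r_o T == _) && _]andbC andbA.
have h_lt : (h < n./2.+1)%N by rewrite ltnS geq_half_double -hs leq_addr.
rewrite (bigD1 (Ordinal h_lt)) //= big1 ?addr0 => [|k hk]; rewrite in_DT1E.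
  have -> : (n - 2 * h)%N = r_o T by rewrite -hs mul2n addKn.
  by rewrite eqxx andbT.
case: (is_disk T && _); rewrite ?mul0r //=.
case: eqP => [e|]; last by rewrite mul0r.
have hk2 : (k.*2 <= n)%N by rewrite -geq_half_double -ltnS ltn_ord.
by move: hk; rewrite -val_eqE /= => /eqP[]; move: hk2 e hs; rewrite -!muln2; lia.
Qed.

Lemma sum_gamma_weight n : \sum_(T <- trees n) \prod_(c <- right_chains T) gamma_weight c =
  gamma_expansion n.+1 (fun k => (count (in_DT1 n.+1 k) (trees n))%:Z).
Proof.
rewrite /gamma_expansion [n.+1.-1]/= (eq_big_seq _ (fun T hT =>
  prod_gamma_weight_expansion (elimT eqP (etrans (esym (mem_trees n T)) hT)))).
rewrite exchange_big /=; apply: eq_bigr => k _.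
rewrite -mulr_suml mulrA; congr (_ * _ * _).
rewrite -natz polyC_natr -sum1_count natr_sum [RHS]big_mkcond /=.
by apply: eq_bigr => T _; case: ifP.
Qed.

Lemma coef0_1X e : ((1 + 'X) ^+ e : {poly int})`_0 = 1.
Proof. by rewrite -horner_coef0 horner_exp !hornerE expr1n. Qed.

(* Triangularity: [X^j (1 + X)^e] has no monomial of degree below [j], and
   its coefficient of degree [j] is [1]. *)
Lemma gamma_basis_free m (d : nat -> int) :
  \sum_(k < m./2.+1) (d k)%:P * 'X^k * (1 + 'X) ^+ (m - 2 * k) = 0 ->
  forall k, (k <= m./2)%N -> d k = 0.
Proof.
move=> H0 k; rewrite -ltnS; elim/ltn_ind: k => k IH hk.
have := congr1 (fun p : {poly int} => p`_k) H0; rewrite coef_sum coef0 /=.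
rewrite (bigD1 (Ordinal hk)) //= big1 ?addr0.
  by rewrite -mulrA coefCM coefXnM ltnn subnn coef0_1X mulr1.
move=> j hj; rewrite -mulrA coefCM coefXnM; case: ltnP => hkj; first by rewrite mulr0.
have hjk : (j < k)%N by rewrite ltn_neqAle hkj andbT; move: hj; rewrite -val_eqE /=.
by rewrite IH ?mul0r // (ltn_trans hjk hk).
Qed.

Lemma gamma_expansion_inj N g g' : gamma_expansion N g = gamma_expansion N g' ->
  forall k, (k <= (N.-1)./2)%N -> g k = g' k.
Proof.
move=> e k hk; apply/eqP; rewrite -subr_eq0; apply/eqP.
apply: (gamma_basis_free (d := fun k => g k - g' k)) hk.
under eq_bigr do rewrite polyCB !mulrBl.
by rewrite sumrB -/(gamma_expansion N g) e subrr.
Qed.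

Lemma des_poly_trees n :
  des_poly n.+1 = \sum_(T <- trees n | disk T) 'X^(count_labels negb T).
Proof.
have perm_seqs :
    perm_eq [seq seq_of_perm pi | pi <- index_enum {perm 'I_n.+1} & avoids_2413_3142 pi]
            [seq perm_of_tree T | T <- trees n & disk T].
  apply: uniq_perm.
  - by rewrite map_inj_uniq ?filter_uniq ?index_enum_uniq //; exact: seq_of_perm_inj.
  - rewrite map_inj_in_uniq ?filter_uniq ?uniq_trees // => T1 T2.
    by rewrite !mem_filter => /andP [d1 _] /andP [d2 _]; exact: perm_of_tree_inj.
  move=> s; apply/mapP/mapP => -[x]; rewrite mem_filter => /andP [hx hxs] ->.
    have [|T dT eT] := perm_of_tree_surj _ (is_perm_seq_of_perm x) (proj1 (avoidsE x) hx).
      by rewrite size_seq_of_perm.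
    exists T => //; rewrite mem_filter dT mem_trees -eqSS -size_perm_of_tree eT.
    by rewrite size_seq_of_perm eqxx.
  have szx : size (perm_of_tree x) = n.+1.
    by move: hxs; rewrite mem_trees size_perm_of_tree => /eqP ->.
  have [pi epi] := seq_of_perm_surj szx (is_perm_of_tree x).
  exists pi; rewrite ?mem_filter ?mem_index_enum ?andbT //.
  by apply/avoidsE; rewrite epi; exact: separable_perm_of_tree.
rewrite /des_poly -big_filter; under eq_bigr do rewrite des_seq_of_perm.
rewrite -(big_map (@seq_of_perm n) xpredT (fun s => 'X^(descents s))) (perm_big _ perm_seqs).
by rewrite big_map big_filter; apply: eq_bigr => T _; rewrite descents_perm_of_tree.
Qed.

Lemma des_poly_gamma n :
  des_poly n.+1 = gamma_expansion n.+1 (fun k => (count (in_DT1 n.+1 k) (trees n))%:Z).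
Proof.
have des0 : des_weight [::] = 1 by rewrite /des_weight /= mul1r.
have gamma0 : gamma_weight [::] = 1 by rewrite /gamma_weight /= !mul1r.
rewrite des_poly_trees -sum_gamma_weight -(sum_chain_weights_eq _ des0 gamma0 len_sum_des_gamma).
by rewrite big_mkcond; apply: eq_bigr => T _; rewrite prod_des_weight; case: (disk T);
  rewrite ?mul1r ?mul0r.
Qed.

End Expansion.

Theorem theorem3p4 (n : nat) (hn : (1 <= n)%N) :
  exists c : nat -> nat,
    (forall k : nat, (k <= (n.-1)./2)%N -> card_trees (in_DT1 n k) (c k)) /\
    des_poly n = gamma_expansion n (fun k => (c k)%:Z) /\
    (forall g : nat -> int, des_poly n = gamma_expansion n g ->
       forall k : nat, (k <= (n.-1)./2)%N -> g k = (c k)%:Z).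
Proof.
case: n hn => [//|n] _; exists (fun k => count (in_DT1 n.+1 k) (trees n)).
split; [|split].
- move=> k _; apply: card_trees_count; first exact: uniq_trees.
  by move=> T /and3P [/andP [_ /eqP nT] _ _]; rewrite mem_trees nT.
- exact: des_poly_gamma.
- by move=> g hg; apply: gamma_expansion_inj; rewrite -hg des_poly_gamma.
Qed.
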